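(* Let $B$ be a Batanin tree of dimension $d$ and $X$ a non-empty set of maximal positions of $B$. Then $\dim(\mathrm{fun}_X B)=d+1$ and $\partial_d(\mathrm{fun}_X B)=B$.
   Context: Batanin trees are generated inductively: for every finite list $B_1,\dots,B_n$ ($n\ge0$) of Batanin trees there is a tree $[B_1,\dots,B_n]$; $\dim[B_1,\dots,B_n]=\max_i(\dim B_i+1)$, with $\dim[\,]=0$. The suspension $\Sigma Y$ of a globular set has $0$-cells $v_-,v_+$ and $(\Sigma Y)_{n+1}=Y_n$. Positions: $\mathrm{Pos}([B_1,\dots,B_n])=\Sigma\mathrm{Pos}(B_1)\vee\cdots\vee\Sigma\mathrm{Pos}(B_n)$ (wedge sum gluing $v_+$ of each summand to $v_-$ of the next; a single point if $n=0$), with $\mathrm{inc}_i\colon\Sigma\mathrm{Pos}(B_i)\to\mathrm{Pos}(B)$ the summand inclusions. A position of $B$ is maximal if its dimension equals $\dim B$. Boundary: $\partial_0B=[\,]$, $\partial_{k+1}[B_1,\dots,B_n]=[\partial_kB_1,\dots,\partial_kB_n]$ (so $\partial_kB=B$ when $k\ge\dim B$). Functorialisation of a tree $B$ with respect to a set $X$ of maximal positions: $\mathrm{fun}_\emptyset B=B$; $\mathrm{fun}_X[\,]=[[\,]]$ for $X\neq\emptyset$; and for $X\neq\emptyset$, $\mathrm{fun}_X[B_1,\dots,B_n]=[\mathrm{fun}_{X_1}B_1,\dots,\mathrm{fun}_{X_n}B_n]$, where $X_i$ is the set of positions $p$ of $B_i$ with $\mathrm{inc}_i(\Sigma p)\in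 X$. *)

From Stdlib Require Import List Arith.
Import ListNotations.

(* A Batanin tree [B_1,...,B_n] is [Node [B_1;...;B_n]]. *)
Inductive tree : Type := Node : list tree -> tree.

Fixpoint tdim (B : tree) : nat :=
  match B with
  | Node l =>
      (fix m (l : list tree) : nat :=
         match l with
         | nil => 0
         | b :: l' => Nat.max (S (tdim b)) (m l')
         end) l
  end.

(* Cells of Pos(B) = Sigma Pos(B_1) v ... v Sigma Pos(B_n):
   - [PV j] is the j-th 0-cell (0 <= j <= n) of the wedge (a single point if n = 0);
   - [PS i p] is inc_i (Sigma p) for a cell p of Pos(B_i) (indices i from 0). *)
Inductive pos : Type :=
| PV : nat -> pos
| PS : nat -> pos -> pos.

Fixpoint pdim (p : pos) : nat :=
  match p with PV _ => 0 | PS _ q => S (pdim q) end.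

Fixpoint is_pos (B : tree) (p : pos) {struct p} : Prop :=
  match B, p with
  | Node l, PV j => j <= length l
  | Node l, PS i q => i < length l /\ is_pos (nth i l (Node nil)) q
  end.

Definition is_max_pos (B : tree) (p : pos) : Prop :=
  is_pos B p /\ pdim p = tdim B.

Fixpoint bdry (k : nat) (B : tree) : tree :=
  match k with
  | 0 => Node nil
  | S k' => match B with Node l => Node (map (bdry k') l) end
  end.

(* X_i = { p | inc_i (Sigma p) \in X }, for a finite set X given as a list *)
Definition subpos (i : nat) (X : list pos) : list pos :=
  flat_map (fun q => match q with
                     | PS j p => if Nat.eqb j i then [p] else []
                     | PV _ => []
                     end) X.

Fixpoint fnc (X : list pos) (B : tree) {struct B} : tree :=
  match X with
  | nil => B
  | _ :: _ =>
      match B with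
      | Node l =>
          match l with
          | nil => Node [Node nil]
          | _ :: _ =>
              Node ((fix go (i : nat) (l : list tree) : list tree :=
                       match l with
                       | nil => nil
                       | b :: l' => fnc (subpos i X) b :: go (S i) l'
                       end) 0 l)
          end
      end
  end.

(** A maximal position [inc_i (Σ q)] of a tree [B = [B_1,...,B_n]] of
    dimension [d+1] forces [B_i] to have dimension [d] with [q] maximal in it,
    so by induction on [d] every child touched by [X] becomes [fun_{X_i} B_i]
    of dimension [d+1] and [d]-boundary [B_i]; untouched children have
    dimension at most [d] and are their own [d]-boundary.  As [X] is non-empty
    some child is touched, so [fun_X B] has dimension [d+2] and
    [(d+1)]-boundary [B]. *)
From Stdlib Require Import List Arith Lia.

Lemma tdim_node_le_iff (l : list tree) (n : nat) :
  tdim (Node l) <= n <-> (forall b, In b l -> S (tdim b) <= n).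
Proof.
  induction l as [|b l IH]; cbn -[tdim].
  - split; [intros _ b []|intros _; apply le_0_n].
  - change (tdim (Node (b :: l))) with (Nat.max (S (tdim b)) (tdim (Node l))).
    rewrite Nat.max_lub_iff, IH.
    split; [intros [hb hl] c [<-|hc]; auto|intros h; split; auto].
Qed.

Lemma tdim_In_lt (l : list tree) (b : tree) : In b l -> tdim b < tdim (Node l).
Proof. intros hb. exact (proj1 (tdim_node_le_iff l _) (le_n _) b hb). Qed.

Lemma tdim_nth_lt (l : list tree) (j : nat) :
  j < length l -> tdim (nth j l (Node nil)) < tdim (Node l).
Proof. intros hj. apply tdim_In_lt, nth_In, hj. Qed.

Lemma pdim_le_tdim (B : tree) (p : pos) : is_pos B p -> pdim p <= tdim B.
Proof.
  revert B; induction p as [j|i q IH]; intros [l] hp; cbn [pdim].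
  - apply le_0_n.
  - destruct hp as [hi hq].
    apply IH in hq. pose proof (tdim_nth_lt l i hi). lia.
Qed.

Lemma bdry_small (k : nat) (B : tree) : tdim B <= k -> bdry k B = B.
Proof.
  revert B; induction k as [|k IH]; intros [l] hB; cbn [bdry].
  - destruct l as [|b l]; [reflexivity|].
    pose proof (tdim_In_lt (b :: l) b (or_introl eq_refl)). lia.
  - f_equal. rewrite <- map_id. apply map_ext_in. intros b hb.
    apply IH. pose proof (tdim_In_lt l b hb). lia.
Qed.

Lemma In_subpos (i : nat) (X : list pos) (q : pos) :
  In q (subpos i X) <-> In (PS i q) X.
Proof.
  unfold subpos. rewrite in_flat_map. split.
  - intros ([j|j p] & hp & hq); [destruct hq|].
    destruct (Nat.eqb_spec j i) as [<-|]; [|destruct hq].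
    destruct hq as [<-|[]]. exact hp.
  - intros h. exists (PS i q). rewrite Nat.eqb_refl. split; [exact h|left; reflexivity].
Qed.

Lemma max_pos_child (l : list tree) (d j : nat) (q : pos) :
  tdim (Node l) = S d -> is_max_pos (Node l) (PS j q) ->
  tdim (nth j l (Node nil)) = d /\ is_max_pos (nth j l (Node nil)) q.
Proof.
  intros hl [[hj hq] hdim]. cbn [pdim] in hdim.
  pose proof (pdim_le_tdim _ _ hq). pose proof (tdim_nth_lt l j hj).
  split; [|split; [exact hq|]]; lia.
Qed.

Lemma max_pos_touches_child (l : list tree) (d : nat) (X : list pos) :
  tdim (Node l) = S d -> X <> nil -> (forall p, In p X -> is_max_pos (Node l) p) ->
  exists j, j < length l /\ subpos j X <> nil.
Proof.
  intros hl hX hmax. destruct X as [|x X]; [congruence|].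
  destruct (hmax x (or_introl eq_refl)) as [hx hdim].
  destruct x as [k|j q]; cbn [pdim] in hdim; [congruence|].
  exists j. split; [exact (proj1 hx)|].
  intros hnil. pose proof (proj2 (In_subpos j (PS j q :: X) q) (or_introl eq_refl)) as hq.
  rewrite hnil in hq. exact hq.
Qed.

(** The children list built by the inner [fix] of [fnc]. *)
Fixpoint fnc_from (X : list pos) (i : nat) (l : list tree) : list tree :=
  match l with
  | nil => nil
  | b :: l' => fnc (subpos i X) b :: fnc_from X (S i) l'
  end.

Lemma fnc_nil (B : tree) : fnc nil B = B.
Proof. destruct B; reflexivity. Qed.

Lemma fnc_node (X : list pos) (l : list tree) :
  X <> nil -> l <> nil -> fnc X (Node l) = Node (fnc_from X 0 l).
Proof.
  intros hX hl. destruct X as [|x X]; [congruence|]. destruct l as [|b l]; [congruence|].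
  cbn -[subpos]. do 2 f_equal. clear hl. generalize 1.
  induction l as [|c l IH]; intros i; cbn -[subpos]; [reflexivity|]. f_equal. apply IH.
Qed.

Lemma length_fnc_from (X : list pos) (i : nat) (l : list tree) :
  length (fnc_from X i l) = length l.
Proof. revert i; induction l; intros i; cbn; auto. Qed.

Lemma nth_fnc_from (X : list pos) (i j : nat) (l : list tree) :
  j < length l ->
  nth j (fnc_from X i l) (Node nil) = fnc (subpos (i + j) X) (nth j l (Node nil)).
Proof.
  revert i j; induction l as [|b l IH]; intros i [|j] hj; cbn in hj |- *; try lia.
  - rewrite Nat.add_0_r. reflexivity.
  - rewrite IH by lia. f_equal. f_equal. lia.
Qed.

Definition fnc_spec (d : nat) : Prop :=
  forall (B : tree) (X : list pos), tdim B = d -> X <> nil ->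
  (forall p, In p X -> is_max_pos B p) ->
  tdim (fnc X B) = S d /\ bdry d (fnc X B) = B.

Lemma fnc_spec_0 : fnc_spec 0.
Proof.
  intros [[|b l]] X hdim hX _.
  - destruct X; [congruence|]. split; reflexivity.
  - pose proof (tdim_In_lt (b :: l) b (or_introl eq_refl)). lia.
Qed.

Lemma fnc_child (d : nat) (b : tree) (Y : list pos) :
  fnc_spec d -> tdim b <= d -> (forall q, In q Y -> tdim b = d /\ is_max_pos b q) ->
  bdry d (fnc Y b) = b /\ tdim (fnc Y b) <= S d /\ (Y <> nil -> tdim (fnc Y b) = S d).
Proof.
  intros IH hb hY. destruct Y as [|q Y].
  - rewrite fnc_nil. split; [apply bdry_small, hb|split; [lia|congruence]].
  - destruct (hY q (or_introl eq_refl)) as [hbd _].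
    destruct (IH b (q :: Y) hbd ltac:(congruence) (fun p hp => proj2 (hY p hp)))
      as [hdim hbdry].
    split; [exact hbdry|split; [lia|auto]].
Qed.

Lemma fnc_spec_S (d : nat) : fnc_spec d -> fnc_spec (S d).
Proof.
  intros IH [l] X hdim hX hmax.
  assert (hl : l <> nil) by (intros ->; discriminate).
  rewrite (fnc_node X l hX hl).
  set (L := fnc_from X 0 l).
  assert (hlen : length L = length l) by apply length_fnc_from.
  assert (hchild : forall j, j < length l ->
    bdry d (nth j L (Node nil)) = nth j l (Node nil) /\
    tdim (nth j L (Node nil)) <= S d /\
    (subpos j X <> nil -> tdim (nth j L (Node nil)) = S d)).
  { intros j hj. unfold L. rewrite nth_fnc_from by exact hj.
    apply fnc_child; [exact IH| |].
    - pose proof (tdim_nth_lt l j hj). lia.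
    - intros q hq. apply In_subpos, hmax in hq. exact (max_pos_child l d j q hdim hq). }
  split.
  - apply Nat.le_antisymm.
    + apply tdim_node_le_iff. intros c hc.
      destruct (In_nth L c (Node nil) hc) as (j & hj & <-). rewrite hlen in hj.
      apply le_n_S, hchild, hj.
    + destruct (max_pos_touches_child l d X hdim hX hmax) as (k & hk & hXk).
      rewrite <- (proj2 (proj2 (hchild k hk)) hXk). apply tdim_nth_lt. lia.
  - cbn [bdry]. f_equal.
    apply nth_ext with (Node nil) (Node nil); [rewrite length_map; exact hlen|].
    intros j hj. rewrite length_map, hlen in hj.
    rewrite (nth_indep _ (Node nil) (bdry d (Node nil))) by (rewrite length_map, hlen; exact hj).
    rewrite map_nth. apply hchild, hj.
Qed.

Theorem lemma4p6 (B : tree) (d : nat) (X : list pos)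
  (hdim : tdim B = d)
  (hne : X <> nil)
  (hmax : forall p, In p X -> is_max_pos B p) :
  tdim (fnc X B) = S d /\ bdry d (fnc X B) = B.
Proof.
  revert B X hdim hne hmax. induction d as [|d IH].
  - exact fnc_spec_0.
  - exact (fnc_spec_S d IH).
Qed.
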